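(* Let $\Gamma$ be a Fuchsian group and let $z_0\in\mathbb{H}^2$ be a point not fixed by any non-identity element of $\Gamma$. Define $B_\Gamma(z_0)=\bigcup_{z\in D_\Gamma(z_0)}D_\Gamma(z)$ and $U_\Gamma(z_0)=\{\gamma\in\Gamma:\ \gamma\cdot D_\Gamma(z_0)\cap B_\Gamma(z_0)\neq\emptyset\}$. Then $U_\Gamma(z_0)$ is a geodesic cover of $\Gamma$ corresponding to the fundamental domain $D_\Gamma(z_0)$.
   Context: $\Gamma$ acts on the upper half plane $\mathbb{H}^2$ by Möbius transformations; $d_{\mathbb{H}^2}$ is the hyperbolic metric. For $w\in\mathbb{H}^2$, the Dirichlet domain is $D_\Gamma(w)=\{z\in\mathbb{H}^2: d_{\mathbb{H}^2}(z,w)\leq d_{\mathbb{H}^2}(z,\gamma\cdot w)\ \forall\gamma\in\Gamma\}$; when $w$ is not fixed by a non-identity element it is a fundamental domain. A subset $\Gamma_0\subset\Gamma$ containing the identity is a geodesic cover of $\Gamma$ corresponding to a fundamental domain $F$ if for all $p,q\in F$, $\min_{\gamma\in\Gamma}d_{\mathbb{H}^2}(p,\gamma\cdot q)=\min_{\gamma\in\Gamma_0}d_{\mathbb{H}^2}(p,\gamma\cdot q)$. *)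

From Stdlib Require Import Reals.
From Coquelicot Require Import Coquelicot.
Open Scope R_scope.

(* 2x2 real matrices (a b ; c d) *)
Record Mat2 := mkMat2 { ma : R; mb : R; mc : R; md : R }.

Definition det2 (g : Mat2) : R := ma g * md g - mb g * mc g.
Definition mat_id : Mat2 := mkMat2 1 0 0 1.
Definition mat_negid : Mat2 := mkMat2 (-1) 0 0 (-1).
Definition mat_mul (g h : Mat2) : Mat2 :=
  mkMat2 (ma g * ma h + mb g * mc h) (ma g * mb h + mb g * md h)
         (mc g * ma h + md g * mc h) (mc g * mb h + md g * md h).
(* inverse of a determinant-one matrix *)
Definition mat_inv (g : Mat2) : Mat2 := mkMat2 (md g) (- mb g) (- mc g) (ma g).

Definition H2 (z : C) : Prop := 0 < Im z.

Definition mobius (g : Mat2) (z : C) : C :=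
  Cdiv (Cplus (Cmult (RtoC (ma g)) z) (RtoC (mb g)))
       (Cplus (Cmult (RtoC (mc g)) z) (RtoC (md g))).

Definition arcosh (x : R) : R := ln (x + sqrt (x * x - 1)).

Definition dH (z w : C) : R :=
  arcosh (1 + (Cmod (Cminus z w))^2 / (2 * Im z * Im w)).

(* A Fuchsian group, given by its (lift to a) subgroup of SL(2,R) whose
   identity is isolated (discreteness). *)
Definition is_SL2_subgroup (G : Mat2 -> Prop) : Prop :=
  (forall g, G g -> det2 g = 1) /\ G mat_id /\
  (forall g h, G g -> G h -> G (mat_mul g h)) /\
  (forall g, G g -> G (mat_inv g)).

Definition discrete_group (G : Mat2 -> Prop) : Prop :=
  exists eps, 0 < eps /\ forall g, G g ->
    Rabs (ma g - 1) < eps -> Rabs (mb g) < eps -> Rabs (mc g) < eps ->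
    Rabs (md g - 1) < eps -> g = mat_id.

Definition Fuchsian (G : Mat2 -> Prop) : Prop :=
  is_SL2_subgroup G /\ discrete_group G.

Definition Dirichlet (G : Mat2 -> Prop) (w : C) (z : C) : Prop :=
  H2 z /\ forall g, G g -> dH z w <= dH z (mobius g w).

Definition B_set (G : Mat2 -> Prop) (z0 : C) (u : C) : Prop :=
  exists z, Dirichlet G z0 z /\ Dirichlet G z u.

Definition U_set (G : Mat2 -> Prop) (z0 : C) (g : Mat2) : Prop :=
  G g /\ exists z, Dirichlet G z0 z /\ B_set G z0 (mobius g z).

Definition geodesic_cover (G G0 : Mat2 -> Prop) (F : C -> Prop) : Prop :=
  (forall g, G0 g -> G g) /\ G0 mat_id /\
  forall p q, F p -> F q ->
    exists g0, G0 g0 /\ forall g, G g -> dH p (mobius g0 q) <= dH p (mobius g q).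

From Stdlib Require Import Reals Lra Psatz Lia List ZArith Classical ClassicalEpsilon.
From Coquelicot Require Import Coquelicot.
Open Scope R_scope.

(* Let p, q ∈ D(z0).  Because Γ is discrete, the orbit distance
   g ↦ d(p, g·q) attains its minimum at some g0 ∈ Γ: the elements moving q
   within bounded distance of p have bounded matrix entries, and a discrete
   group contains no sequence of pairwise distinct elements with bounded
   entries, so there is no strictly decreasing sequence of orbit distances.
   By Γ-invariance of the metric, minimality of g0 says d(g0·q, p) ≤ d(g0·q, g·p)
   for all g, i.e. g0·q ∈ D(p).  Hence g0·q ∈ B(z0) (witness p ∈ D(z0)) and
   g0 ∈ U(z0) (witness q ∈ D(z0)), and g0 realises the minimum required of a
   geodesic cover. *)

Lemma mat_mul_id_r g : mat_mul g mat_id = g.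
Proof. destruct g; unfold mat_mul, mat_id; cbn; f_equal; ring. Qed.

Lemma mat_inv_mul_l g : det2 g = 1 -> mat_mul (mat_inv g) g = mat_id.
Proof.
  destruct g as [a b c d]. unfold det2, mat_mul, mat_inv, mat_id; cbn.
  intro Hdet. f_equal; lra.
Qed.

Lemma mat_mul_inv_cancel_l h g : det2 h = 1 -> mat_mul h (mat_mul (mat_inv h) g) = g.
Proof.
  destruct h as [a b c d], g as [a' b' c' d']. unfold det2, mat_mul, mat_inv; cbn.
  intro Hdet. f_equal;
    match goal with |- _ = ?x => transitivity (x * (a * d - b * c)); [ring | rewrite Hdet; ring] end.
Qed.

Lemma det_inv g : det2 (mat_inv g) = det2 g.
Proof. unfold det2, mat_inv; cbn; ring. Qed.

(* Real coordinates of g·z: with D = |cz + d|², the image is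
   (Re((az+b)(c z̄+d)) / D, det g · Im z / D). *)
Definition denom (g : Mat2) (z : C) : R :=
  (mc g * fst z + md g)^2 + (mc g * snd z)^2.
Definition mob_re (g : Mat2) (z : C) : R :=
  ((ma g * fst z + mb g) * (mc g * fst z + md g) + ma g * mc g * snd z * snd z)
  / denom g z.
Definition mob_im (g : Mat2) (z : C) : R := snd z * det2 g / denom g z.

Lemma denom_pos g z : det2 g = 1 -> 0 < snd z -> 0 < denom g z.
Proof.
  unfold denom, det2; intros Hdet Hz.
  destruct (Req_dec (mc g) 0) as [Hc | Hc].
  - rewrite Hc in *.
    assert (Hd : md g <> 0) by (intro Hd; rewrite Hd in Hdet; lra).
    pose proof (pow2_gt_0 _ Hd). nra.
  - assert (Hcz : mc g * snd z <> 0) by (apply Rmult_integral_contrapositive; split; lra).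
    pose proof (pow2_gt_0 _ Hcz). pose proof (pow2_ge_0 (mc g * fst z + md g)). lra.
Qed.

Lemma mobius_denom_neq0 g z : det2 g = 1 -> H2 z ->
  Cplus (Cmult (RtoC (mc g)) z) (RtoC (md g)) <> 0%C.
Proof.
  intros Hdet Hz E. pose proof (denom_pos g z Hdet Hz) as Hpos.
  destruct z as [x y]. unfold Cplus, Cmult, RtoC in E; cbn in E.
  injection E as Ere Eim. unfold denom in Hpos; cbn in Hpos.
  replace (mc g * x + md g) with 0 in Hpos by lra.
  replace (mc g * y) with 0 in Hpos by lra. lra.
Qed.

Lemma mobius_coords g z : det2 g = 1 -> 0 < snd z -> mobius g z = (mob_re g z, mob_im g z).
Proof.
  intros Hdet Hz. pose proof (denom_pos g z Hdet Hz) as Hpos.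
  destruct z as [x y]. unfold mobius, mob_re, mob_im, denom, det2 in *; cbn in *.
  unfold Cdiv, Cplus, Cmult, Cinv, RtoC; cbn. f_equal; field; lra.
Qed.

Lemma H2_mobius g z : det2 g = 1 -> H2 z -> H2 (mobius g z).
Proof.
  intros Hdet Hz. unfold H2, Im in *. rewrite mobius_coords by assumption.
  unfold mob_im; cbn. rewrite Hdet. pose proof (denom_pos g z Hdet Hz).
  apply Rdiv_lt_0_compat; lra.
Qed.

Lemma mobius_id z : mobius mat_id z = z.
Proof.
  destruct z as [x y]. unfold mobius, mat_id, Cdiv, Cplus, Cmult, Cinv, RtoC; cbn.
  f_equal; field.
Qed.

Lemma mobius_mul g h z : det2 g = 1 -> det2 h = 1 -> H2 z ->
  mobius (mat_mul g h) z = mobius g (mobius h z).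
Proof.
  intros Hg Hh Hz.
  pose proof (mobius_denom_neq0 h z Hh Hz) as Nh.
  pose proof (mobius_denom_neq0 g _ Hg (H2_mobius h z Hh Hz)) as Ng.
  unfold mobius in *. destruct g as [a b c d], h as [a' b' c' d'].
  unfold mat_mul; cbn [ma mb mc md] in *.
  rewrite !RtoC_plus, !RtoC_mult. field.
  split; [exact Nh|].
  intro E. apply Ng.
  replace (c * ((a' * z + b') / (c' * z + d')) + d)%C
    with ((c * (a' * z + b') + d * (c' * z + d')) / (c' * z + d'))%C by (field; exact Nh).
  rewrite E. unfold Cdiv. apply Cmult_0_l.
Qed.

Lemma mobius_inv_l g z : det2 g = 1 -> H2 z -> mobius (mat_inv g) (mobius g z) = z.
Proof.
  intros Hdet Hz.
  assert (Hinv : det2 (mat_inv g) = 1) by (rewrite det_inv; exact Hdet).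
  rewrite <- mobius_mul, mat_inv_mul_l, mobius_id by assumption. reflexivity.
Qed.

(* d(z, w) = arcosh (1 + dquot z w); comparisons of distances reduce to
   comparisons of this rational quantity. *)
Definition dquot (z w : C) : R :=
  ((fst z - fst w)^2 + (snd z - snd w)^2) / (2 * snd z * snd w).

Lemma dH_dquot z w : dH z w = arcosh (1 + dquot z w).
Proof.
  unfold dH, dquot, Cmod, Im. rewrite pow2_sqrt; [reflexivity|].
  pose proof (pow2_ge_0 (fst (Cminus z w))). pose proof (pow2_ge_0 (snd (Cminus z w))). lra.
Qed.

Lemma dquot_nonneg z w : 0 < snd z -> 0 < snd w -> 0 <= dquot z w.
Proof.
  intros Hz Hw. unfold dquot. apply Rdiv_le_0_compat.
  - pose proof (pow2_ge_0 (fst z - fst w)). pose proof (pow2_ge_0 (snd z - snd w)). lra.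
  - nra.
Qed.

Lemma dquot_sym z w : dquot z w = dquot w z.
Proof. unfold dquot. f_equal; ring. Qed.

Lemma dquot_self z : dquot z z = 0.
Proof. unfold dquot, Rminus. rewrite !Rplus_opp_r. unfold Rdiv. ring. Qed.

Lemma arcosh_mono s t : 0 <= s -> s <= t -> arcosh (1 + s) <= arcosh (1 + t).
Proof.
  intros Hs Hst. unfold arcosh. apply ln_le.
  - pose proof (sqrt_pos ((1 + s) * (1 + s) - 1)). lra.
  - apply Rplus_le_compat; [lra|]. apply sqrt_le_1_alt. nra.
Qed.

Lemma dH_le_of_dquot z w z' w' : 0 < snd z -> 0 < snd w ->
  dquot z w <= dquot z' w' -> dH z w <= dH z' w'.
Proof.
  intros Hz Hw Hle. rewrite !dH_dquot. apply arcosh_mono; [apply dquot_nonneg|]; assumption.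
Qed.

(* SL(2,R) acts by isometries: this is a rational identity valid whenever
   det g ≠ 0, since |gz - gw|² and Im(gz)·Im(gw) both scale by det²/(D_z D_w). *)
Lemma dquot_mobius g z w : det2 g = 1 -> 0 < snd z -> 0 < snd w ->
  dquot (mobius g z) (mobius g w) = dquot z w.
Proof.
  intros Hdet Hz Hw.
  pose proof (denom_pos g z Hdet Hz). pose proof (denom_pos g w Hdet Hw).
  rewrite !mobius_coords by assumption.
  destruct z as [x y], w as [x' y'], g as [a b c d].
  unfold dquot, mob_re, mob_im, denom, det2 in *; cbn [fst snd ma mb mc md] in *.
  field. repeat split; lra.
Qed.

Definition entries_bounded (K : R) (g : Mat2) : Prop :=
  Rabs (ma g) <= K /\ Rabs (mb g) <= K /\ Rabs (mc g) <= K /\ Rabs (md g) <= K.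

Lemma mob_im_denom g z : det2 g = 1 -> 0 < snd z -> mob_im g z * denom g z = snd z.
Proof.
  intros Hdet Hz. pose proof (denom_pos g z Hdet Hz).
  unfold mob_im. rewrite Hdet. field. lra.
Qed.

Lemma mobius_numerator g z : det2 g = 1 -> 0 < snd z ->
  (ma g * fst z + mb g)^2 + (ma g * snd z)^2 = (mob_re g z ^ 2 + mob_im g z ^ 2) * denom g z.
Proof.
  intros Hdet Hz. pose proof (denom_pos g z Hdet Hz).
  destruct z as [x y], g as [a b c d].
  unfold mob_re, mob_im, denom, det2 in *; cbn [fst snd ma mb mc md] in *.
  field. lra.
Qed.

Lemma near_point_bounds px py u v M : 0 < py -> 0 < v -> 0 <= M ->
  (px - u)^2 + (py - v)^2 <= 2 * M * py * v ->
  py <= (2 * M + 2) * v /\ v <= (2 * M + 2) * py /\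
  u^2 <= 2 * px^2 + 4 * M * (2 * M + 2) * py^2.
Proof.
  intros Hpy Hv HM Hnear.
  pose proof (pow2_ge_0 (px - u)). pose proof (pow2_ge_0 (py - v)).
  assert (Hlow : py <= (2 * M + 2) * v) by nra.
  assert (Hup : v <= (2 * M + 2) * py) by nra.
  split; [exact Hlow | split; [exact Hup|]].
  pose proof (pow2_ge_0 (2 * px - u)).
  assert (M * py * v <= M * py * ((2 * M + 2) * py)) by (apply Rmult_le_compat_l; nra).
  nra.
Qed.

(* If |cz + d|² ≤ B with Im z = y > 0, then |c| and |d| are bounded by
   [pair_bound B x y] (using |t| ≤ 1 + t²). *)
Definition pair_bound (B x y : R) : R := 1 + B / y^2 + (2 * B + 2 * (B / y^2) * x^2).

Lemma pair_bound_ge1 B x y : 0 <= B -> 0 < y -> 1 <= pair_bound B x y.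
Proof.
  intros HB Hy. unfold pair_bound.
  assert (0 <= B / y^2) by (apply Rdiv_le_0_compat; [lra | apply pow2_gt_0; lra]).
  pose proof (pow2_ge_0 x). nra.
Qed.

Lemma abs_le_1_sq t : Rabs t <= 1 + t^2.
Proof. unfold Rabs; destruct Rcase_abs; nra. Qed.

Lemma pair_bound_spec c d x y B : 0 < y -> (c * x + d)^2 + (c * y)^2 <= B ->
  Rabs c <= pair_bound B x y /\ Rabs d <= pair_bound B x y.
Proof.
  intros Hy HB. unfold pair_bound.
  assert (Hy2 : 0 < y^2) by (apply pow2_gt_0; lra).
  pose proof (pow2_ge_0 (c * x + d)). pose proof (pow2_ge_0 (c * y)). pose proof (pow2_ge_0 x).
  assert (Hc : c^2 <= B / y^2).
  { apply Rmult_le_reg_r with (y^2); [exact Hy2|].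
    unfold Rdiv. rewrite Rmult_assoc, Rinv_l by lra. nra. }
  assert (Hd : d^2 <= 2 * B + 2 * (B / y^2) * x^2).
  { pose proof (pow2_ge_0 (2 * c * x + d)).
    assert (c^2 * x^2 <= (B / y^2) * x^2) by (apply Rmult_le_compat_r; lra). nra. }
  assert (0 <= B / y^2) by (apply Rdiv_le_0_compat; lra).
  pose proof (abs_le_1_sq c). pose proof (abs_le_1_sq d). split; nra.
Qed.

(* Properness of the action: the g ∈ SL(2,R) with dquot (p, g·q) ≤ M have
   uniformly bounded entries.  g·q stays in a compact set, which bounds
   |cq + d|² = Im q / Im(g·q) and then |aq + b|² = |g·q|² |cq + d|². *)
Lemma entry_bound p q M : H2 p -> H2 q -> 0 <= M -> exists K, 0 < K /\
  forall g, det2 g = 1 -> dquot p (mobius g q) <= M -> entries_bounded K g.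
Proof.
  destruct p as [px py], q as [x y]. unfold H2, Im; cbn [fst snd]. intros Hp Hq HM.
  set (Dmax := (2 * M + 2) * y / py).
  set (Smax := (2 * px^2 + 4 * M * (2 * M + 2) * py^2 + ((2 * M + 2) * py)^2) * Dmax).
  assert (HDmax : 0 <= Dmax) by (apply Rdiv_le_0_compat; nra).
  assert (HSmax : 0 <= Smax) by (apply Rmult_le_pos; [pose proof (pow2_ge_0 px); nra | exact HDmax]).
  exists (pair_bound Dmax x y + pair_bound Smax x y).
  pose proof (pair_bound_ge1 Dmax x y HDmax Hq). pose proof (pair_bound_ge1 Smax x y HSmax Hq).
  split; [lra|]. intros g Hdet Hdq.
  pose proof (denom_pos g (x, y) Hdet Hq) as HD.
  pose proof (mob_im_denom g (x, y) Hdet Hq) as Him.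
  pose proof (mobius_numerator g (x, y) Hdet Hq) as Hnum.
  rewrite mobius_coords in Hdq by assumption.
  set (u := mob_re g (x, y)) in *. set (v := mob_im g (x, y)) in *.
  set (D := denom g (x, y)) in *. cbn [fst snd] in *.
  assert (Hv : 0 < v) by (apply (Rmult_lt_reg_r D); lra).
  assert (Hnear : (px - u)^2 + (py - v)^2 <= 2 * M * py * v).
  { unfold dquot in Hdq; cbn [fst snd] in Hdq.
    apply (Rmult_le_compat_r (2 * py * v)) in Hdq; [|nra].
    unfold Rdiv in Hdq. rewrite Rmult_assoc, Rinv_l in Hdq by nra. lra. }
  destruct (near_point_bounds px py u v M Hp Hv HM Hnear) as [Hlow [Hup Hu]].
  assert (HDle : D <= Dmax).
  { unfold Dmax. apply (Rmult_le_reg_r py); [exact Hp|].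
    unfold Rdiv. rewrite Rmult_assoc, Rinv_l by lra. nra. }
  assert (HSle : (ma g * x + mb g)^2 + (ma g * y)^2 <= Smax).
  { rewrite Hnum. unfold Smax.
    pose proof (pow2_ge_0 u). pose proof (pow2_ge_0 v).
    apply Rmult_le_compat; nra. }
  destruct (pair_bound_spec (mc g) (md g) x y Dmax Hq HDle) as [Hc Hd].
  destruct (pair_bound_spec _ _ _ _ _ Hq HSle) as [Ha Hb].
  repeat split; lra.
Qed.

Lemma small_combination K eta s t u v : Rabs s <= K -> Rabs t <= K ->
  Rabs u < eta -> Rabs v < eta -> Rabs (s * u - t * v) < (2 * K + 1) * eta.
Proof.
  intros Hs Ht Hu Hv.
  pose proof (Rabs_pos s). pose proof (Rabs_pos u). pose proof (Rabs_pos v).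
  assert (Rabs s * Rabs u <= K * eta) by (apply Rmult_le_compat; lra).
  assert (Rabs t * Rabs v <= K * eta) by (apply Rmult_le_compat; auto using Rabs_pos; lra).
  eapply Rle_lt_trans; [apply Rabs_triang|]. rewrite Rabs_Ropp, !Rabs_mult. nra.
Qed.

(* If the identity is eps-isolated in G, two elements of G whose entries are
   (eps/(2K+1))-close, one of them with entries bounded by K, coincide:
   h⁻¹g is then eps-close to the identity. *)
Lemma discrete_separated G eps K eta g h : is_SL2_subgroup G ->
  (forall g, G g -> Rabs (ma g - 1) < eps -> Rabs (mb g) < eps -> Rabs (mc g) < eps ->
    Rabs (md g - 1) < eps -> g = mat_id) ->
  (2 * K + 1) * eta <= eps -> G g -> G h -> entries_bounded K h ->
  Rabs (ma g - ma h) < eta -> Rabs (mb g - mb h) < eta ->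
  Rabs (mc g - mc h) < eta -> Rabs (md g - md h) < eta -> g = h.
Proof.
  intros [Hdet [_ [Hmul Hinv]]] Hdisc Heta Hg Hh [Ba [Bb [Bc Bd]]] Ca Cb Cc Cd.
  rewrite <- (mat_mul_inv_cancel_l h g (Hdet h Hh)).
  rewrite (Hdisc _ (Hmul _ _ (Hinv _ Hh) Hg)), mat_mul_id_r; [reflexivity|..].
  all: pose proof (Hdet h Hh) as Dh; destruct g as [a b c d], h as [a' b' c' d'].
  all: unfold det2, mat_mul, mat_inv in *; cbn [ma mb mc md] in *.
  - replace (d' * a + - b' * c - 1) with (d' * (a - a') - b' * (c - c')) by nra.
    pose proof (small_combination K eta _ _ _ _ Bd Bb Ca Cc). lra.
  - replace (d' * b + - b' * d) with (d' * (b - b') - b' * (d - d')) by ring.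
    pose proof (small_combination K eta _ _ _ _ Bd Bb Cb Cd). lra.
  - replace (- c' * a + a' * c) with (a' * (c - c') - c' * (a - a')) by ring.
    pose proof (small_combination K eta _ _ _ _ Ba Bc Cc Ca). lra.
  - replace (- c' * b + a' * d - 1) with (a' * (d - d') - c' * (b - b')) by nra.
    pose proof (small_combination K eta _ _ _ _ Ba Bc Cd Cb). lra.
Qed.

(* Index of the cell of width eta containing t ∈ [-K, K]; equal indices mean
   eta-close values, and there are finitely many indices. *)
Definition grid_index (K eta t : R) : nat := Z.to_nat (up ((t + K) / eta)).

Lemma grid_index_close K eta t s : 0 < eta -> Rabs t <= K -> Rabs s <= K ->
  grid_index K eta t = grid_index K eta s -> Rabs (t - s) < eta.
Proof.
  intros He Ht Hs E. unfold grid_index in E.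
  apply Rabs_le_between in Ht. apply Rabs_le_between in Hs.
  assert (0 <= (t + K) / eta) by (apply Rdiv_le_0_compat; lra).
  assert (0 <= (s + K) / eta) by (apply Rdiv_le_0_compat; lra).
  destruct (archimed ((t + K) / eta)) as [A1 A2].
  destruct (archimed ((s + K) / eta)) as [B1 B2].
  assert (0 <= up ((t + K) / eta))%Z by (apply le_IZR; lra).
  assert (0 <= up ((s + K) / eta))%Z by (apply le_IZR; lra).
  apply Z2Nat.inj in E; [|assumption..]. rewrite E in A1, A2.
  assert (Hq : Rabs ((t - s) / eta) < 1).
  { replace ((t - s) / eta) with ((t + K) / eta - (s + K) / eta) by (field; lra).
    apply Rabs_def1; lra. }
  unfold Rdiv in Hq. rewrite Rabs_mult, Rabs_inv, (Rabs_right eta) in Hq by lra.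
  apply (Rmult_lt_compat_r eta) in Hq; [|lra].
  rewrite Rmult_assoc, Rinv_l, Rmult_1_r in Hq by lra. lra.
Qed.

Lemma grid_index_lt K eta t : 0 < eta -> Rabs t <= K ->
  (grid_index K eta t < S (Z.to_nat (up (2 * K / eta))))%nat.
Proof.
  intros He Ht. unfold grid_index. apply Rabs_le_between in Ht.
  assert (0 <= (t + K) / eta) by (apply Rdiv_le_0_compat; lra).
  assert ((t + K) / eta <= 2 * K / eta)
    by (apply Rmult_le_compat_r; [apply Rlt_le, Rinv_0_lt_compat |]; lra).
  destruct (archimed ((t + K) / eta)) as [A1 A2].
  destruct (archimed (2 * K / eta)) as [B1 B2].
  assert (0 <= up ((t + K) / eta))%Z by (apply le_IZR; lra).
  assert (up ((t + K) / eta) < up (2 * K / eta) + 1)%Z by (apply lt_IZR; rewrite plus_IZR; lra).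
  lia.
Qed.

Lemma pigeonhole {T} (F : nat -> T) (L : list T) : (forall n, In (F n) L) ->
  exists n m, n <> m /\ F n = F m.
Proof.
  intro HL. apply NNPP. intro Hinj.
  assert (Hnodup : NoDup (map F (seq 0 (S (length L))))).
  { apply NoDup_map_NoDup_ForallPairs; [|apply seq_NoDup].
    intros n m _ _ E. apply NNPP. intro Hnm. apply Hinj. exists n, m. auto. }
  apply NoDup_incl_length with (l' := L) in Hnodup.
  - rewrite length_map, length_seq in Hnodup. lia.
  - intros x Hx. apply in_map_iff in Hx. destruct Hx as [n [<- _]]. apply HL.
Qed.

(* In a Fuchsian group every sequence with bounded entries repeats: two of
   its terms lie in the same grid cell, hence are close, hence equal. *)
Lemma bounded_sequence_repeats G K (s : nat -> Mat2) : Fuchsian G ->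
  (forall n, G (s n)) -> (forall n, entries_bounded K (s n)) ->
  exists n m, n <> m /\ s n = s m.
Proof.
  intros [HS [eps [Heps Hdisc]]] HG Hb.
  assert (HK : 0 <= K) by (destruct (Hb 0%nat) as [Ha _]; pose proof (Rabs_pos (ma (s 0%nat))); lra).
  set (eta := eps / (2 * K + 1)).
  assert (Heta : 0 < eta) by (apply Rdiv_lt_0_compat; lra).
  set (cell := fun n => (grid_index K eta (ma (s n)), grid_index K eta (mb (s n)),
                         grid_index K eta (mc (s n)), grid_index K eta (md (s n)))).
  set (N := seq 0 (S (Z.to_nat (up (2 * K / eta))))).
  destruct (pigeonhole cell (list_prod (list_prod (list_prod N N) N) N)) as [n [m [Hnm E]]].
  - intro n. destruct (Hb n) as [Ba [Bb [Bc Bd]]]. unfold cell, N.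
    repeat apply in_prod; apply in_seq; (split; [lia | apply grid_index_lt; assumption]).
  - exists n, m. split; [exact Hnm|].
    unfold cell in E. injection E as Ea Eb Ec Ed.
    destruct (Hb n) as [Ba [Bb [Bc Bd]]]. destruct (Hb m) as [Ba' [Bb' [Bc' Bd']]].
    apply (discrete_separated G eps K eta); auto.
    + unfold eta. right. field. lra.
    + all: apply (grid_index_close K); assumption.
Qed.

Lemma descending_chain {T} (P : T -> Prop) (f : T -> R) (x0 : T) : P x0 ->
  (forall x, P x -> exists y, P y /\ f y < f x) ->
  exists s : nat -> T, s 0%nat = x0 /\ (forall n, P (s n)) /\ (forall n, f (s (S n)) < f (s n)).
Proof.
  intros H0 Hstep.
  assert (next : forall x : {x | P x}, {y : {y | P y} | f (proj1_sig y) < f (proj1_sig x)}).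
  { intros [x Hx]. destruct (constructive_indefinite_description _ (Hstep x Hx)) as [y [Hy Hlt]].
    exists (exist P y Hy). exact Hlt. }
  set (s := fun n => Nat.iter n (fun x => proj1_sig (next x)) (exist P x0 H0)).
  exists (fun n => proj1_sig (s n)). split; [reflexivity | split].
  - intro n. exact (proj2_sig (s n)).
  - intro n. exact (proj2_sig (next (s n))).
Qed.

Lemma descending_lt (f : nat -> R) : (forall n, f (S n) < f n) ->
  forall n m, (n < m)%nat -> f m < f n.
Proof.
  intros Hdec n m Hnm. induction Hnm as [|m Hnm IH].
  - apply Hdec.
  - specialize (Hdec m). lra.
Qed.

(* Otherwise a strictly decreasing chain starting at the identity stays within
   distance d(p, q), so it has bounded entries and must repeat. *)
Lemma closest_orbit_point G p q : Fuchsian G -> H2 p -> H2 q ->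
  exists g0, G g0 /\ forall g, G g -> dquot p (mobius g0 q) <= dquot p (mobius g q).
Proof.
  intros HF Hp Hq. pose proof HF as [[Hdet [Hid _]] _].
  apply NNPP. intro Hnone.
  destruct (descending_chain G (fun g => dquot p (mobius g q)) mat_id Hid)
    as [s [Hs0 [HsG Hdec]]].
  { intros g Hg. apply NNPP. intro Hmin. apply Hnone. exists g. split; [exact Hg|].
    intros h Hh. apply Rnot_lt_le. intro Hlt. apply Hmin. exists h. auto. }
  pose proof (descending_lt _ Hdec) as Hlt.
  assert (Hbelow : forall n, dquot p (mobius (s n) q) <= dquot p q).
  { intro n. replace (dquot p q) with (dquot p (mobius (s 0%nat) q))
      by (rewrite Hs0, mobius_id; reflexivity).
    destruct n; [lra | apply Rlt_le, Hlt; lia]. }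
  destruct (entry_bound p q (dquot p q) Hp Hq (dquot_nonneg p q Hp Hq)) as [K [_ HK]].
  destruct (bounded_sequence_repeats G K s HF HsG (fun n => HK _ (Hdet _ (HsG n)) (Hbelow n)))
    as [n [m [Hnm Heq]]].
  destruct (Nat.lt_total n m) as [H | [H | H]]; [| contradiction |];
    pose proof (Hlt _ _ H) as Hc; cbv beta in Hc; rewrite Heq in Hc; lra.
Qed.

Lemma Dirichlet_center G z : is_SL2_subgroup G -> H2 z -> Dirichlet G z z.
Proof.
  intros [Hdet _] Hz. split; [exact Hz|]. intros g Hg.
  apply dH_le_of_dquot; [exact Hz | exact Hz|].
  rewrite dquot_self. apply dquot_nonneg; [exact Hz | apply H2_mobius; auto].
Qed.

(* Key step: if g0·q is a closest point of the orbit Γ·q to p, then g0·q lies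
   in the Dirichlet domain centred at p, because
   d(g0·q, g·p) = d(g⁻¹g0·q, p) ≥ d(g0·q, p). *)
Lemma Dirichlet_of_closest G p q g0 : is_SL2_subgroup G -> H2 p -> H2 q -> G g0 ->
  (forall g, G g -> dquot p (mobius g0 q) <= dquot p (mobius g q)) ->
  Dirichlet G p (mobius g0 q).
Proof.
  intros [Hdet [_ [Hmul Hinv]]] Hp Hq Hg0 Hmin.
  assert (Hg0q : H2 (mobius g0 q)) by (apply H2_mobius; auto).
  split; [exact Hg0q|]. intros g Hg.
  assert (Hgp : H2 (mobius g p)) by (apply H2_mobius; auto).
  apply dH_le_of_dquot; [exact Hg0q | exact Hp |].
  rewrite <- (dquot_mobius (mat_inv g) (mobius g0 q) (mobius g p)) by auto.
  rewrite mobius_inv_l, <- mobius_mul by auto.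
  rewrite !(dquot_sym _ p). apply Hmin. apply Hmul; auto.
Qed.

Theorem proposition2p2 (G : Mat2 -> Prop) (z0 : C) :
  Fuchsian G -> H2 z0 ->
  (forall g, G g -> mobius g z0 = z0 -> g = mat_id \/ g = mat_negid) ->
  geodesic_cover G (U_set G z0) (Dirichlet G z0).
Proof.
  intros HF Hz0 _. pose proof HF as [HS _]. pose proof HS as [Hdet [Hid _]].
  pose proof (Dirichlet_center G z0 HS Hz0) as Hcenter.
  split; [|split].
  - intros g [Hg _]. exact Hg.
  - (* the identity lies in U: take z0 both as the point of D(z0) and as witness for B *)
    split; [exact Hid|]. exists z0. split; [exact Hcenter|].
    rewrite mobius_id. exists z0. split; exact Hcenter.
  - intros p q [Hp Hdp] [Hq Hdq].
    destruct (closest_orbit_point G p q HF Hp Hq) as [g0 [Hg0 Hmin]].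
    exists g0. split.
    + (* g0 ∈ U: g0·q ∈ D(p) with p ∈ D(z0), so g0·q ∈ B(z0) *)
      split; [exact Hg0|]. exists q. split; [split; assumption|].
      exists p. split; [split; assumption|].
      exact (Dirichlet_of_closest G p q g0 HS Hp Hq Hg0 Hmin).
    + intros g Hg. apply dH_le_of_dquot; [exact Hp | apply H2_mobius; auto | auto].
Qed.
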